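(* Let $G$ be a maximal subgroup of a completely simple semigroup $S$. Let $\sigma : X^+ \to G$ be a semigroup choice of generators for $G$ and $\tau : Y^+ \to S$ a semigroup choice of generators for $S$ such that $X \subseteq Y$ and $\sigma$ is the restriction of $\tau$ to $X^+$. Then $L_\sigma(G) = L_\tau(S) \cap \hat{X}^*$.
   Context: Maps are written on the right. $X^*$, $X^+$ are the free monoid and free semigroup on $X$. A semigroup is completely simple if it has no proper ideals and has a primitive idempotent (an idempotent $e$ with: every idempotent $f$ such that $ef = fe = f$ equals $e$). A maximal subgroup is a subsemigroup which is a group under the inherited multiplication and is contained in no larger such. For a monoid $M$ and surjective morphism $\sigma : X^* \to M$, let $\overline{X} = \{\overline{x} : x \in X\}$ be new symbols ($\overline{Y}$ similarly, with $\overline{X} \subseteq \overline{Y}$ when $X \subseteq Y$), $\hat{X} = X \cup \overline{X}$; the loop automaton has vertex set $M$, for each $a \in M$, $x \in X$ an edge $a \to a(x\sigma)$ labelled $x$ and an edge $a(x\sigma) \to a$ labelled $\overline{x}$; the loop problem $L_\sigma(M) \subseteq \hat{X}^*$ is the set of labels of paths from the identity to the identity. For a semigroup $T$ with surjective morphism $\sigma : X^+ \to T$, $T^1$ denotes $T$ with a new identity adjoined (even if $T$ already has one), $\sigma^1 : X^* \to T^1$ the extension, and $L_\sigma(T) := L_{\sigma^1}(T^1)$ (this applies to both $G$ and $S$ here). *)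

From Stdlib Require Import List.
Import ListNotations.
Set Implicit Arguments.

Definition associative_op {T : Type} (mul : T -> T -> T) : Prop :=
  forall a b c, mul a (mul b c) = mul (mul a b) c.

Definition is_ideal {T : Type} (mul : T -> T -> T) (I : T -> Prop) : Prop :=
  (exists a, I a) /\ (forall s a, I a -> I (mul s a) /\ I (mul a s)).

Definition is_idempotent {T : Type} (mul : T -> T -> T) (e : T) : Prop :=
  mul e e = e.

Definition primitive_idempotent {T : Type} (mul : T -> T -> T) (e : T) : Prop :=
  is_idempotent mul e /\
  (forall f, is_idempotent mul f -> mul e f = f -> mul f e = f -> f = e).

Definition completely_simple {T : Type} (mul : T -> T -> T) : Prop :=
  (forall I, is_ideal mul I -> forall s, I s) /\
  (exists e, primitive_idempotent mul e).

Definition subsemigroup {T : Type} (mul : T -> T -> T) (H : T -> Prop) : Prop :=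
  forall a b, H a -> H b -> H (mul a b).

Definition is_subgroup {T : Type} (mul : T -> T -> T) (H : T -> Prop) : Prop :=
  subsemigroup mul H /\
  exists e, H e /\
    (forall a, H a -> mul e a = a /\ mul a e = a) /\
    (forall a, H a -> exists b, H b /\ mul a b = e /\ mul b a = e).

Definition maximal_subgroup {T : Type} (mul : T -> T -> T) (G : T -> Prop) : Prop :=
  is_subgroup mul G /\
  (forall H, is_subgroup mul H -> (forall a, G a -> H a) -> forall a, H a -> G a).

(* Value of a word in the free semigroup under the morphism induced by f:
   evalw a [y1;...;yn] = a (f y1) ... (f yn);
   word_value y w = value of the nonempty word y :: w. *)
Fixpoint evalw {A T : Type} (mul : T -> T -> T) (f : A -> T) (a : T) (w : list A) : T :=
  match w with
  | [] => a
  | y :: w' => evalw mul f (mul a (f y)) w'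
  end.

Definition word_value {A T : Type} (mul : T -> T -> T) (f : A -> T) (y : A) (w : list A) : T :=
  evalw mul f (f y) w.

(* Hat alphabet: inl x stands for x, inr x for \overline{x}. *)
Definition hat_letter_in {A : Type} (X : A -> Prop) (l : A + A) : Prop :=
  match l with inl x => X x | inr x => X x end.

(* Monoid T^1 (new identity adjoined) represented by option T, None = identity;
   restricted to a subsemigroup P of T (vertex set P^1). *)
Definition vertex {T : Type} (P : T -> Prop) (v : option T) : Prop :=
  match v with None => True | Some t => P t end.

Definition act1 {T : Type} (mul : T -> T -> T) (a : option T) (t : T) : option T :=
  Some (match a with None => t | Some a' => mul a' t end).

(* Paths in the loop automaton of P^1 w.r.t. generators L (a set of letters)
   with images f:  edge a -> a(x f) labelled x, edge a(x f) -> a labelled xbar. *)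
Fixpoint loop_path {A T : Type} (mul : T -> T -> T) (P : T -> Prop) (L : A -> Prop)
    (f : A -> T) (a : option T) (w : list (A + A)) (b : option T) : Prop :=
  match w with
  | [] => a = b
  | l :: w' =>
      exists c, vertex P c /\
        (match l with
         | inl x => L x /\ c = act1 mul a (f x)
         | inr x => L x /\ a = act1 mul c (f x)
         end) /\
        loop_path mul P L f c w' b
  end.

Definition loop_problem {A T : Type} (mul : T -> T -> T) (P : T -> Prop) (L : A -> Prop)
    (f : A -> T) (w : list (A + A)) : Prop :=
  loop_path mul P L f None w None.

From Stdlib Require Import List.
Set Implicit Arguments.

(* Forgetting the vertex and letter constraints turns a loop of the automaton of
   G^1 into a loop of S^1 labelled over the hat alphabet of X.  Conversely, take a
   loop of S^1 labelled over X with e the identity of G.  Right multiplication by e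
   commutes with every edge labelled by a letter of X (those act by elements of G),
   and a vertex a reachable from 1 along such edges satisfies a e ∈ G (forward
   edges by closure, backward edges because c e = (c t) e t^-1).  So multiplying
   all vertices by e maps the loop onto a loop of G^1. *)

Lemma vertex_weaken (T : Type) (P P' : T -> Prop) (a : option T) :
  (forall t, P t -> P' t) -> vertex P a -> vertex P' a.
Proof. destruct a; simpl; auto. Qed.

Lemma loop_path_weaken (A T : Type) (mul : T -> T -> T) (P P' : T -> Prop)
    (L L' : A -> Prop) (f : A -> T) :
  (forall t, P t -> P' t) -> (forall x, L x -> L' x) ->
  forall w a b, loop_path mul P L f a w b -> loop_path mul P' L' f a w b.
Proof.
  intros HP HL; induction w as [|l w IH]; intros a b Hw; simpl in *; [exact Hw|].
  destruct Hw as [c [Hc [Hl Hw]]].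
  exists c; split; [eapply vertex_weaken; eassumption|].
  split; [destruct l; destruct Hl; auto | exact (IH _ _ Hw)].
Qed.

Lemma loop_path_labels (A T : Type) (mul : T -> T -> T) (P : T -> Prop)
    (L : A -> Prop) (f : A -> T) :
  forall w a b, loop_path mul P L f a w b -> Forall (hat_letter_in L) w.
Proof.
  induction w as [|l w IH]; intros a b Hw; simpl in *; [constructor|].
  destruct Hw as [c [_ [Hl Hw]]].
  constructor; [destruct l; apply Hl | exact (IH _ _ Hw)].
Qed.

Section Retraction.

Variables (S : Type) (mul : S -> S -> S) (G : S -> Prop) (e : S).
Hypothesis mulA : associative_op mul.
Hypothesis G_closed : subsemigroup mul G.
Hypothesis G_unit : forall a, G a -> mul e a = a /\ mul a e = a.
Hypothesis G_inv : forall a, G a -> exists b, G b /\ mul a b = e /\ mul b a = e.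

Definition retract (a : option S) : option S := option_map (fun s => mul s e) a.

Lemma retract_act1 a t : G t -> retract (act1 mul a t) = act1 mul (retract a) t.
Proof.
  intro Gt; destruct (G_unit Gt) as [et te]; destruct a as [s|]; unfold act1; simpl.
  - rewrite <- !mulA, te, et; reflexivity.
  - rewrite te; reflexivity.
Qed.

Lemma vertex_retract_act1 a t :
  G t -> vertex G (retract a) -> vertex G (retract (act1 mul a t)).
Proof.
  intros Gt Ga; rewrite (retract_act1 _ Gt).
  destruct a as [s|]; simpl in *; [apply G_closed|]; assumption.
Qed.

Lemma vertex_retract_act1_inv c t :
  G t -> vertex G (retract (act1 mul c t)) -> vertex G (retract c).
Proof.
  intros Gt Gct; destruct c as [s|]; simpl in *; [|exact I].
  destruct (G_inv Gt) as [t' [Gt' [tt' _]]].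
  destruct (G_unit Gt) as [_ te].
  rewrite <- mulA, te in Gct.
  rewrite <- tt', mulA; apply G_closed; assumption.
Qed.

Lemma loop_path_retract (Y : Type) (X : Y -> Prop) (tau : Y -> S) :
  (forall x, X x -> G (tau x)) ->
  forall w a b, vertex G (retract a) ->
    loop_path mul (fun _ => True) (fun _ => True) tau a w b ->
    Forall (hat_letter_in X) w ->
    loop_path mul G X tau (retract a) w (retract b).
Proof.
  intros tauG; induction w as [|l w IH]; intros a b Ga Hw HX; simpl in *.
  - rewrite Hw; reflexivity.
  - destruct Hw as [c [_ [Hl Hw]]].
    inversion_clear HX as [|? ? Xl HX'].
    exists (retract c).
    destruct l as [x|x]; simpl in Xl; destruct Hl as [_ Hc]; subst;
      pose proof (tauG x Xl) as Gt.
    + assert (Gc := vertex_retract_act1 a Gt Ga).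
      split; [exact Gc|].
      split; [split; [exact Xl | apply retract_act1, Gt] | apply IH; assumption].
    + assert (Gc := vertex_retract_act1_inv Gt Ga).
      split; [exact Gc|].
      split; [split; [exact Xl | apply retract_act1, Gt] | apply IH; assumption].
Qed.

End Retraction.

Theorem theorem5p4
  (S : Type) (mul : S -> S -> S)
  (Hassoc : associative_op mul)
  (Hcs : completely_simple mul)
  (G : S -> Prop) (HG : maximal_subgroup mul G)
  (Y : Type) (X : Y -> Prop) (tau : Y -> S)
  (* tau : Y^+ -> S is surjective *)
  (Htau : forall s, exists (y : Y) (w : list Y), word_value mul tau y w = s)
  (* sigma := restriction of tau to X^+ maps into G ... *)
  (Hsig_into : forall x, X x -> G (tau x))
  (* ... and is surjective onto G *)
  (Hsig_surj : forall g, G g ->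
     exists (x : Y) (w : list Y), X x /\ Forall X w /\ word_value mul tau x w = g) :
  forall w : list (Y + Y),
    loop_problem mul G X tau w <->
    (loop_problem mul (fun _ => True) (fun _ => True) tau w /\ Forall (hat_letter_in X) w).
Proof.
  intro w; unfold loop_problem; split.
  - intro Hw; split.
    + revert Hw; apply loop_path_weaken; auto.
    + eapply loop_path_labels; exact Hw.
  - intros [Hw HX].
    destruct HG as [[G_closed [e [_ [G_unit G_inv]]]] _].
    exact (loop_path_retract Hassoc G_closed G_unit G_inv tau Hsig_into None None I Hw HX).
Qed.
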